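(* Let $G=(A,B;E)$ be the incidence graph of a finite set $A$ of points and a finite set $B$ of open axis-parallel rectangles in $\mathbb{R}^2$, and let $k$ be a positive integer. Then $G\otimes k$ is isomorphic to the incidence graph of some finite set of points and some finite set of open axis-parallel rectangles in $\mathbb{R}^2$.
   Context: The incidence graph of points $P$ and rectangles $\mathcal{R}$ is the bipartite graph with classes $P$, $\mathcal{R}$, where $p$ and $R$ are adjacent iff $p\in R$. For a bipartite graph $G=(A,B;E)$ and positive integer $k$, $G\otimes k$ is the bipartite graph with vertex classes $A\times[k]$ and $(B\times[k])\cup A'$, where $A'$ is a disjoint copy of $A$; $(u,i)\in A\times[k]$ and $(v,j)\in B\times[k]$ are adjacent iff $i=j$ and $\{u,v\}\in E$; $(u,i)\in A\times[k]$ and $v\in A'$ are adjacent iff $v$ is the copy of $u$; there are no other edges. *)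

From Stdlib Require Import Reals.
From mathcomp Require Import all_boot.
Set Implicit Arguments. Unset Strict Implicit. Unset Printing Implicit Defensive.

Record rect := Rect { rx1 : R; rx2 : R; ry1 : R; ry2 : R }.

Definition rect_ok (r : rect) : Prop := Rlt (rx1 r) (rx2 r) /\ Rlt (ry1 r) (ry2 r).

Definition in_rect (p : R * R) (r : rect) : Prop :=
  (Rlt (rx1 r) (fst p) /\ Rlt (fst p) (rx2 r)) /\
  (Rlt (ry1 r) (snd p) /\ Rlt (snd p) (ry2 r)).

(* A bipartite graph with classes A, B is given by its edge relation E : A -> B -> Prop. *)

Definition incidence (TP TQ : Type) (p : TP -> R * R) (r : TQ -> rect) : TP -> TQ -> Prop :=
  fun a b => in_rect (p a) (r b).

(* G (x) k : classes A x [k] and (B x [k]) + A' (inr a is the copy of a in A'). *)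
Definition tensor (A B : Type) (E : A -> B -> Prop) (k : nat) :
    A * 'I_k -> (B * 'I_k) + A -> Prop :=
  fun u v => match v with
             | inl (b, j) => snd u = j /\ E (fst u) b
             | inr a => fst u = a
             end.

Definition bip_iso (A1 B1 A2 B2 : Type) (E1 : A1 -> B1 -> Prop) (E2 : A2 -> B2 -> Prop) : Prop :=
  exists (f : A1 -> A2) (g : B1 -> B2),
    bijective f /\ bijective g /\ forall a b, E1 a b <-> E2 (f a) (g b).

Arguments tensor {A B} E k _ _.

From Stdlib Require Import Reals Lra.
From mathcomp Require Import all_boot.

Set Implicit Arguments.
Unset Strict Implicit.
Unset Printing Implicit Defensive.

(* Perturb the configuration so that all points get distinct heights: since
   the finitely many heights of points and rectangle edges are separated by a
   gap d, raising each point by a distinct amount in (0, d/4] and every bottom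
   edge by d/2 keeps every incidence.  Then place the k copies of the
   configuration side by side, squeezing the plane into the vertical strip
   (PI i - PI/2, PI i + PI/2) by x |-> PI i + atan x for copy i.  The copy a'
   of a point a becomes a thin horizontal rectangle crossing all strips at the
   height of a, which meets no other point because the heights are distinct. *)

Local Open Scope R_scope.

Lemma atan_lt_atan u v : atan u < atan v <-> u < v.
Proof.
split; last exact: atan_increasing.
move=> lt_atan; case: (Rlt_le_dec u v) => // /Rle_lt_or_eq_dec [/atan_increasing|eq_uv].
- lra.
- by move: lt_atan; rewrite eq_uv; lra.
Qed.

Lemma atan_inj : injective atan.
Proof.
move=> u v eq_atan.
by case: (Rtotal_order u v) => [/atan_increasing|[//|/atan_increasing]]; lra.
Qed.

Lemma INR_ltn (m n : nat) : (m < n)%N -> INR m + 1 <= INR n.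
Proof. by move=> lt_mn; rewrite -S_INR; apply/le_INR/leP. Qed.

Lemma finite_pos_lbound (T : finType) (f : T -> R) :
  exists e, 0 < e /\ forall t, 0 < f t -> e <= f t.
Proof.
suff [e [e_pos e_lb]] : exists e, 0 < e /\
    forall t, t \in enum T -> 0 < f t -> e <= f t.
  by exists e; split=> // t; apply: e_lb; rewrite mem_enum.
elim: (enum T) => [|x s [e [e_pos e_lb]]]; first by exists 1; split; [lra|].
case: (Rlt_dec 0 (f x)) => [fx_pos|fx_npos].
- exists (Rmin e (f x)); split; first exact: Rmin_pos.
  move=> t; rewrite in_cons => /orP [/eqP -> _|t_s ft_pos]; first exact: Rmin_r.
  exact: Rle_trans (Rmin_l _ _) (e_lb t t_s ft_pos).
- exists e; split=> // t; rewrite in_cons => /orP [/eqP -> //|t_s].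
  exact: e_lb.
Qed.

Lemma finite_gap (T : finType) (f : T -> R) :
  exists e, 0 < e /\ forall s t, f s < f t -> e <= f t - f s.
Proof.
have [e [e_pos e_lb]] := finite_pos_lbound (fun st : (T * T)%type => f st.2 - f st.1).
by exists e; split=> // s t lt_st; apply: (e_lb (s, t)) => /=; lra.
Qed.

Lemma exists_small_injective (T : finType) (c : R) :
  0 < c -> exists f : T -> R, injective f /\ forall t, 0 < f t <= c.
Proof.
move=> c_pos; exists (fun t => c / (INR (enum_rank t) + 1)); split.
- move=> s t /(Rmult_eq_reg_l c) /(_ (Rgt_not_eq _ _ c_pos)) /Rinv_eq_reg eq_st.
  by apply/enum_rank_inj/ord_inj/INR_eq; lra.
- move=> t; have rank_ge0 := pos_INR (enum_rank t); split.
  + by apply: Rdiv_lt_0_compat; lra.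
  + rewrite -[X in _ <= X]Rmult_1_r; apply: Rmult_le_compat_l; first lra.
    by rewrite -Rinv_1; apply: Rinv_le_contravar; lra.
Qed.

Lemma nudge_interval (lo hi y d e : R) :
  0 < e <= d / 4 -> (lo < y -> d <= y - lo) -> (y < hi -> d <= hi - y) ->
  lo < y < hi <-> lo + d / 2 < y + e < hi.
Proof.
move=> e_bd gap_lo gap_hi; split=> [[lo_y y_hi]|[lo_ye ye_hi]].
- by have := gap_lo lo_y; have := gap_hi y_hi; lra.
- split; last lra.
  by case: (Rlt_le_dec lo y) => // y_lo; lra.
Qed.

Lemma tensor_equiv (A B : Type) (E E' : A -> B -> Prop) (k : nat) :
  (forall a b, E a b <-> E' a b) -> forall u v, tensor E k u v <-> tensor E' k u v.
Proof. by move=> eqE [a i] [[b j]|c] //=; rewrite eqE. Qed.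

Lemma bip_iso_of_equiv (A B : Type) (E E' : A -> B -> Prop) :
  (forall a b, E a b <-> E' a b) -> bip_iso E E'.
Proof.
move=> eqE; exists id, id; split; [|split] => //; exact: (Bijective (g := id)).
Qed.

Section DistinctHeights.

Variables (TA TB : finType) (pA : TA -> R * R) (rB : TB -> rect).
Hypothesis injB : injective rB.
Hypothesis okB : forall b, rect_ok (rB b).

Let level (v : TA + (TB + TB)) : R :=
  match v with
  | inl a => snd (pA a)
  | inr (inl b) => ry1 (rB b)
  | inr (inr b) => ry2 (rB b)
  end.

Lemma distinct_heights :
  exists (pA' : TA -> R * R) (rB' : TB -> rect),
    [/\ injective (fun a => snd (pA' a)), injective rB',
        (forall b, rect_ok (rB' b)) &
        forall a b, incidence pA rB a b <-> incidence pA' rB' a b].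
Proof.
have [d [d_pos gap]] := finite_gap level.
have gap_points a c : snd (pA a) < snd (pA c) -> d <= snd (pA c) - snd (pA a).
  exact: gap (inl a) (inl c).
have gap_bottom a b : ry1 (rB b) < snd (pA a) -> d <= snd (pA a) - ry1 (rB b).
  exact: gap (inr (inl b)) (inl a).
have gap_top a b : snd (pA a) < ry2 (rB b) -> d <= ry2 (rB b) - snd (pA a).
  exact: gap (inl a) (inr (inr b)).
have gap_edges b : ry1 (rB b) < ry2 (rB b) -> d <= ry2 (rB b) - ry1 (rB b).
  exact: gap (inr (inl b)) (inr (inr b)).
have d4_pos : 0 < d / 4 by lra.
have [nu [nu_inj nu_bd]] := exists_small_injective TA d4_pos.
exists (fun a => (fst (pA a), snd (pA a) + nu a)).
exists (fun b => Rect (rx1 (rB b)) (rx2 (rB b)) (ry1 (rB b) + d / 2) (ry2 (rB b))).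
split.
- move=> a c /= eq_ac; have := nu_bd a; have := nu_bd c.
  case: (Rtotal_order (snd (pA a)) (snd (pA c))) => [lt_ac|[eq_y|gt_ac]].
  + by have := gap_points a c lt_ac; lra.
  + by move=> _ _; apply: nu_inj; lra.
  + by have := gap_points c a gt_ac; lra.
- move=> b c [eq_x1 eq_x2 eq_y1 eq_y2]; apply: injB.
  by move: eq_x1 eq_x2 eq_y1 eq_y2; case: (rB b) => ????; case: (rB c) => ???? /= -> -> ? ->;
    congr Rect; lra.
- move=> b; have [ok_x ok_y] := okB b; split=> //=.
  by have := gap_edges b ok_y; lra.
- move=> a b; rewrite /incidence /in_rect /=; apply: and_iff_compat_l.
  apply: nudge_interval => [|lo_y|y_hi]; first by have := nu_bd a; lra.
  + exact: gap_bottom a b lo_y.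
  + exact: gap_top a b y_hi.
Qed.

End DistinctHeights.

Definition strip (i : nat) (u : R) : R := PI * INR i + atan u.

Lemma strip_bound i u : PI * INR i - PI / 2 < strip i u < PI * INR i + PI / 2.
Proof. by rewrite /strip; have := atan_bound u; lra. Qed.

Lemma strip_lt_strip (i j : nat) u v : (i < j)%N -> strip i u < strip j v.
Proof.
move=> /INR_ltn /(Rmult_le_compat_l PI _ _ (Rlt_le _ _ PI_RGT_0)) lt_ij.
by have := strip_bound i u; have := strip_bound j v; lra.
Qed.

Lemma strip_lt_strip_r i u v : strip i u < strip i v <-> u < v.
Proof.
by rewrite /strip; split=> [lt_strip|/atan_increasing]; [apply/atan_lt_atan|]; lra.
Qed.

Lemma strip_inj (i j : nat) u v : strip i u = strip j v -> i = j /\ u = v.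
Proof.
case: (ltngtP i j) => [/strip_lt_strip lt_ij|/strip_lt_strip lt_ji|<-] eq_strip.
- by have := lt_ij u v; lra.
- by have := lt_ji v u; lra.
- by split=> //; apply: atan_inj; move: eq_strip; rewrite /strip; lra.
Qed.

Lemma strip_interval (i j : nat) u lo hi :
  strip j lo < strip i u < strip j hi <-> i = j /\ lo < u < hi.
Proof.
split=> [[lo_u u_hi]|[-> [lo_u u_hi]]]; last by rewrite !strip_lt_strip_r.
case: (ltngtP i j) => [/strip_lt_strip lt_ij|/strip_lt_strip lt_ji|eq_ij].
- by have := lt_ij u lo; lra.
- by have := lt_ji hi u; lra.
- by move: lo_u u_hi; rewrite eq_ij !strip_lt_strip_r.
Qed.

Lemma strip_range (k : nat) (i : 'I_k) u : - PI < strip i u < PI * INR k.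
Proof.
have := strip_bound i u; have := INR_ltn (ltn_ord i); have := pos_INR i.
by have := PI_RGT_0; nra.
Qed.

Section Tensor.

Variables (TA TB : finType) (pA : TA -> R * R) (rB : TB -> rect) (k : nat) (e : R).
Hypothesis heights_inj : injective (fun a => snd (pA a)).
Hypothesis e_pos : 0 < e.
Hypothesis heights_gap :
  forall a c, snd (pA a) < snd (pA c) -> e <= snd (pA c) - snd (pA a).

Definition tensor_point : TA * 'I_k -> R * R :=
  fun u => (strip u.2 (fst (pA u.1)), snd (pA u.1)).

Definition tensor_rect : (TB * 'I_k) + TA -> rect :=
  fun v => match v with
  | inl (b, j) => Rect (strip j (rx1 (rB b))) (strip j (rx2 (rB b))) (ry1 (rB b)) (ry2 (rB b))
  | inr a => Rect (- PI) (PI * INR k) (snd (pA a) - e / 2) (snd (pA a) + e / 2)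
  end.

Lemma near_height a c :
  snd (pA a) - e / 2 < snd (pA c) < snd (pA a) + e / 2 <-> c = a.
Proof.
split=> [near_ac|->]; last lra.
case: (Rtotal_order (snd (pA a)) (snd (pA c))) => [lt_ac|[eq_ac|gt_ac]].
- by have := heights_gap lt_ac; lra.
- exact: heights_inj.
- by have := heights_gap gt_ac; lra.
Qed.

Lemma tensor_point_inj : injective tensor_point.
Proof.
move=> [a i] [c j] [/strip_inj [eq_ij _] /heights_inj eq_ac].
by rewrite eq_ac (val_inj eq_ij).
Qed.

Lemma tensor_rect_inj : injective rB -> injective tensor_rect.
Proof.
move=> injB [[b i]|a] [[c j]|a'] //=.
- move=> [eq_x1 eq_x2 eq_y1 eq_y2].
  have [eq_ij eq_rx1] := strip_inj eq_x1; have [_ eq_rx2] := strip_inj eq_x2.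
  rewrite (val_inj eq_ij) (injB b c) //.
  by move: eq_rx1 eq_rx2 eq_y1 eq_y2; case: (rB b) => ????; case: (rB c) => ???? /= -> -> -> ->.
- by move=> [eq_x1 _ _ _]; have := strip_range i (rx1 (rB b)); lra.
- by move=> [eq_x1 _ _ _]; have := strip_range j (rx1 (rB c)); lra.
- by move=> [eq_y1 _]; congr inr; apply: heights_inj => /=; lra.
Qed.

Lemma tensor_rect_ok : (forall b, rect_ok (rB b)) -> forall v, rect_ok (tensor_rect v).
Proof.
move=> okB [[b j]|a]; rewrite /rect_ok /=.
- by have [ok_x ok_y] := okB b; rewrite strip_lt_strip_r.
- by have := Rmult_le_pos _ _ (Rlt_le _ _ PI_RGT_0) (pos_INR k); have := PI_RGT_0; lra.
Qed.

Lemma tensor_incidence u v :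
  tensor (incidence pA rB) k u v <-> incidence tensor_point tensor_rect u v.
Proof.
case: u v => [a i] [[b j]|c]; rewrite /tensor /incidence /in_rect /=.
- rewrite -and_assoc strip_interval.
  by split=> [[[-> in_x] in_y]|[[/ord_inj -> in_x] in_y]].
- by rewrite near_height; split=> [<-|[_ <-]] //; split=> //; apply: strip_range.
Qed.

End Tensor.

Local Close Scope R_scope.

Theorem lemma5p4 (TA TB : finType) (pA : TA -> R * R) (rB : TB -> rect)
    (injA : injective pA) (injB : injective rB) (okB : forall b, rect_ok (rB b))
    (k : nat) (hk : 0 < k) :
  exists (TP TQ : finType) (p : TP -> R * R) (r : TQ -> rect),
    [/\ injective p, injective r, (forall q, rect_ok (r q)) &
        bip_iso (tensor (incidence pA rB) k) (incidence p r)].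
Proof.
have [pA' [rB' [heights_inj injB' okB' same_incidence]]] := distinct_heights pA injB okB.
have [e [e_pos heights_gap]] := finite_gap (fun a => snd (pA' a)).
exists (TA * 'I_k)%type, ((TB * 'I_k) + TA)%type.
exists (@tensor_point _ pA' k), (@tensor_rect _ _ pA' rB' k e); split.
- exact: tensor_point_inj.
- exact: tensor_rect_inj.
- exact: tensor_rect_ok.
- apply: bip_iso_of_equiv => u v.
  exact: iff_trans (tensor_equiv same_incidence u v)
                   (tensor_incidence rB' heights_inj e_pos heights_gap u v).
Qed.
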